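(* For every positive integer $k$, $$\int_0^{\pi/2} x^2\cos^{2k-1}(x)\,dx = \frac14\,\frac{4^k H_k^{(2)}}{k\binom{2k}{k}}-\frac{4^k H_{2k}^{(2)}}{k\binom{2k}{k}}+\frac34\zeta(2)\,\frac{4^k}{k\binom{2k}{k}}.$$
   Context: For positive integers $n$, $H_n^{(2)}=\sum_{j=1}^n j^{-2}$ is the generalized harmonic number of order $2$; $\binom{2k}{k}$ is the central binomial coefficient and $\zeta$ is the Riemann zeta function. *)

From Stdlib Require Import Reals.
From Coquelicot Require Import Coquelicot.
Open Scope R_scope.

Definition H2 (n : nat) : R := sum_n_m (fun j => / (INR j ^ 2)) 1 n.

Definition zeta2 : R := Series (fun n => / (INR (S n) ^ 2)).

(** Write [W n] ([Wallis n]) and [J n] ([Wallis_sq n]) for the integrals of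
    [cos x ^ n] and [x ^ 2 * cos x ^ n] over [0, PI/2].  Integrating by parts gives
    [(n+2) W (n+2) = (n+1) W n] and [(n+2)^2 J (n+2) = (n+2)(n+1) J n - 2 W (n+2)].
    On even indices these recurrences give [J (2n) = W (2n) (PI^2/12 - H_n^(2)/2)],
    and [0 <= J (2n+2) <= W (2n) - W (2n+2) = W (2n+2) / (2n+1)] (from
    [x cos x <= sin x]) then squeezes [H_n^(2)] to [PI^2/6], which is [zeta(2)].
    On odd indices, [W (2k-1) = 4^k / (2k C(2k,k))] and the recurrence for [J]
    is solved in closed form by induction. *)

From Stdlib Require Import Reals Lra Lia Nsatz.
From Coquelicot Require Import Coquelicot.
Open Scope R_scope.

Ltac solve_continuous :=
  intros; apply (ex_derive_continuous (K := R_AbsRing) (V := R_NormedModule));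
  auto_derive; easy.

Ltac solve_ex_RInt :=
  apply (ex_RInt_continuous (V := R_CompleteNormedModule)); solve_continuous.

Lemma RInt_is_derive (F f : R -> R) (a b : R) :
  (forall x, is_derive F x (f x)) -> (forall x, continuous f x) ->
  RInt f a b = F b - F a.
Proof.
  intros HF Hf; apply is_RInt_unique.
  now apply (is_RInt_derive (V := R_CompleteNormedModule)).
Qed.

Lemma RInt_lincomb2 (f g : R -> R) (a b u v : R) :
  ex_RInt f a b -> ex_RInt g a b ->
  RInt (fun x => u * f x + v * g x) a b = u * RInt f a b + v * RInt g a b.
Proof.
  intros Hf Hg; apply is_RInt_unique.
  exact (is_RInt_plus _ _ a b _ _ (is_RInt_scal _ a b u _ (RInt_correct f a b Hf))
           (is_RInt_scal _ a b v _ (RInt_correct g a b Hg))).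
Qed.

Lemma RInt_lincomb3 (f g h : R -> R) (a b u v w : R) :
  ex_RInt f a b -> ex_RInt g a b -> ex_RInt h a b ->
  RInt (fun x => u * f x + (v * g x + w * h x)) a b
  = u * RInt f a b + (v * RInt g a b + w * RInt h a b).
Proof.
  intros Hf Hg Hh; apply is_RInt_unique.
  exact (is_RInt_plus _ _ a b _ _ (is_RInt_scal _ a b u _ (RInt_correct f a b Hf))
           (is_RInt_plus _ _ a b _ _ (is_RInt_scal _ a b v _ (RInt_correct g a b Hg))
              (is_RInt_scal _ a b w _ (RInt_correct h a b Hh)))).
Qed.

Lemma x_cos_le_sin (x : R) : 0 <= x <= PI -> x * cos x <= sin x.
Proof.
  intros Hx.
  assert (Hpos : 0 <= RInt (fun t => t * sin t) 0 x).
  { apply (is_RInt_ge_0 (fun t => t * sin t) 0 x); [lra | | ].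
    - apply (RInt_correct (V := R_CompleteNormedModule)); solve_ex_RInt.
    - intros t Ht; apply Rmult_le_pos; [lra | apply sin_ge_0; lra]. }
  rewrite (RInt_is_derive (fun t => sin t - t * cos t)) in Hpos; [ | | solve_continuous].
  - rewrite sin_0, cos_0 in Hpos; lra.
  - intros t; auto_derive; [easy | ring].
Qed.

Lemma H2_0 : H2 0 = 0.
Proof. unfold H2; rewrite sum_n_m_zero by lia; reflexivity. Qed.

Lemma H2_S (n : nat) : H2 (S n) = H2 n + / INR (S n) ^ 2.
Proof.
  unfold H2; destruct n as [|n].
  - rewrite sum_n_n, sum_n_m_zero by lia; simpl; change (zero : R) with 0; ring.
  - rewrite sum_n_Sm by lia; reflexivity.
Qed.

Lemma H2_1 : H2 1 = 1.
Proof. rewrite H2_S, H2_0; simpl; field. Qed.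

Lemma H2_2 : H2 2 = 1 + / 4.
Proof. rewrite H2_S, H2_1; simpl; field. Qed.

Definition Wallis (n : nat) : R := RInt (fun x => cos x ^ n) 0 (PI / 2).
Definition Wallis_sq (n : nat) : R := RInt (fun x => x ^ 2 * cos x ^ n) 0 (PI / 2).

Lemma Wallis_0 : Wallis 0 = PI / 2.
Proof.
  unfold Wallis; rewrite (RInt_is_derive (fun x => x)); [lra | | solve_continuous].
  intros x; auto_derive; [easy | ring].
Qed.

Lemma Wallis_1 : Wallis 1 = 1.
Proof.
  unfold Wallis; rewrite (RInt_is_derive sin); [ | | solve_continuous].
  - rewrite sin_PI2, sin_0; ring.
  - intros x; auto_derive; [easy | ring].
Qed.

Lemma Wallis_sq_0 : Wallis_sq 0 = (PI / 2) ^ 3 / 3.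
Proof.
  unfold Wallis_sq; rewrite (RInt_is_derive (fun x => x ^ 3 / 3)); [field | | solve_continuous].
  intros x; auto_derive; [easy | field].
Qed.

Lemma Wallis_sq_1 : Wallis_sq 1 = (PI / 2) ^ 2 - 2.
Proof.
  unfold Wallis_sq.
  rewrite (RInt_is_derive (fun x => x ^ 2 * sin x + 2 * x * cos x - 2 * sin x));
    [ | | solve_continuous].
  - rewrite sin_PI2, sin_0, cos_PI2, cos_0; ring.
  - intros x; auto_derive; [easy | ring].
Qed.

Lemma Wallis_rec (n : nat) : (INR n + 2) * Wallis (n + 2) = (INR n + 1) * Wallis n.
Proof.
  assert (Hparts : RInt (fun x => (INR n + 2) * cos x ^ (n + 2) + (- (INR n + 1)) * cos x ^ n)
                  0 (PI / 2) = 0).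
  { rewrite (RInt_is_derive (fun x => sin x * cos x ^ (n + 1))); [ | | solve_continuous].
    - rewrite cos_PI2, sin_0, pow_add; simpl; ring.
    - intros x; auto_derive; [easy | ].
      replace (Init.Nat.pred (n + 1)) with n by lia.
      rewrite !pow_add, !plus_INR; simpl.
      pose proof (sin2_cos2 x) as Hsc; unfold Rsqr in Hsc; nsatz. }
  rewrite RInt_lincomb2 in Hparts by solve_ex_RInt.
  unfold Wallis; lra.
Qed.

Lemma Wallis_sq_rec (n : nat) :
  (INR n + 2) ^ 2 * Wallis_sq (n + 2)
  = (INR n + 2) * (INR n + 1) * Wallis_sq n - 2 * Wallis (n + 2).
Proof.
  assert (Hparts : RInt (fun x => (INR n + 2) ^ 2 * (x ^ 2 * cos x ^ (n + 2))
                  + ((- ((INR n + 2) * (INR n + 1))) * (x ^ 2 * cos x ^ n)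
                     + 2 * cos x ^ (n + 2))) 0 (PI / 2) = 0).
  { rewrite (RInt_is_derive
               (fun x => x ^ 2 * ((INR n + 2) * cos x ^ (n + 1) * sin x)
                         + 2 * x * cos x ^ (n + 2))); [ | | solve_continuous].
    - rewrite cos_PI2, sin_0, !pow_add; simpl; ring.
    - intros x; auto_derive; [easy | ].
      replace (Init.Nat.pred (n + 1)) with n by lia.
      replace (Init.Nat.pred (n + 2)) with (n + 1)%nat by lia.
      rewrite !pow_add, !plus_INR; simpl.
      pose proof (sin2_cos2 x) as Hsc; unfold Rsqr in Hsc; nsatz. }
  rewrite RInt_lincomb3 in Hparts by solve_ex_RInt.
  unfold Wallis, Wallis_sq; lra.
Qed.

Lemma Wallis_even_pos (n : nat) : 0 < Wallis (2 * n).
Proof.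
  induction n as [|n IH].
  - simpl; rewrite Wallis_0; pose proof PI_RGT_0; lra.
  - replace (2 * S n)%nat with (2 * n + 2)%nat by lia.
    pose proof (Wallis_rec (2 * n)) as Hrec; pose proof (pos_INR (2 * n)).
    apply (Rmult_lt_reg_l (INR (2 * n) + 2)); [lra | ].
    rewrite Hrec, Rmult_0_r; apply Rmult_lt_0_compat; lra.
Qed.

Lemma Wallis_sq_ge0 (n : nat) : 0 <= Wallis_sq n.
Proof.
  apply (is_RInt_ge_0 (fun x => x ^ 2 * cos x ^ n) 0 (PI / 2)); [pose proof PI_RGT_0; lra | | ].
  - apply (RInt_correct (V := R_CompleteNormedModule)); solve_ex_RInt.
  - intros x Hx; apply Rmult_le_pos; [apply pow2_ge_0 | apply pow_le, cos_ge_0; lra].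
Qed.

Lemma Wallis_sq_le (n : nat) : Wallis_sq (n + 2) <= Wallis n - Wallis (n + 2).
Proof.
  pose proof PI_RGT_0.
  replace (Wallis n - Wallis (n + 2)) with (1 * Wallis n + (-1) * Wallis (n + 2)) by ring.
  unfold Wallis; rewrite <- RInt_lincomb2 by solve_ex_RInt.
  apply RInt_le; [lra | solve_ex_RInt | solve_ex_RInt | ].
  intros x Hx.
  assert (Hcos : 0 <= cos x) by (apply cos_ge_0; lra).
  assert (Hxcos : 0 <= x * cos x <= sin x)
    by (split; [apply Rmult_le_pos | apply x_cos_le_sin]; lra).
  assert (Hsq : (x * cos x) ^ 2 <= 1 - cos x ^ 2).
  { pose proof (sin2_cos2 x) as Hsc; unfold Rsqr in Hsc.
    replace (1 - cos x ^ 2) with (sin x ^ 2) by (simpl; lra).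
    apply pow_incr; lra. }
  pose proof (pow_le _ n Hcos).
  rewrite pow_add.
  replace (x ^ 2 * (cos x ^ n * cos x ^ 2)) with (cos x ^ n * (x * cos x) ^ 2) by ring.
  replace (1 * cos x ^ n + -1 * (cos x ^ n * cos x ^ 2)) with (cos x ^ n * (1 - cos x ^ 2))
    by ring.
  apply Rmult_le_compat_l; lra.
Qed.

Lemma Wallis_sq_even (n : nat) : Wallis_sq (2 * n) = Wallis (2 * n) * (PI ^ 2 / 12 - H2 n / 2).
Proof.
  induction n as [|n IH].
  - simpl; rewrite Wallis_sq_0, Wallis_0, H2_0; field.
  - replace (2 * S n)%nat with (2 * n + 2)%nat by lia.
    pose proof (Wallis_sq_rec (2 * n)) as HJ; pose proof (Wallis_rec (2 * n)) as HW.
    rewrite mult_INR in HJ, HW; simpl INR in HJ, HW.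
    replace (1 + 1) with 2 in HJ, HW by ring.
    rewrite IH in HJ.
    replace ((2 * INR n + 2) * (2 * INR n + 1) * (Wallis (2 * n) * (PI ^ 2 / 12 - H2 n / 2)))
      with ((2 * INR n + 2) * (PI ^ 2 / 12 - H2 n / 2) * ((2 * INR n + 1) * Wallis (2 * n)))
      in HJ by ring.
    rewrite <- HW in HJ.
    pose proof (pos_INR n).
    apply (Rmult_eq_reg_l ((2 * INR n + 2) ^ 2)); [ | apply pow_nonzero; lra].
    rewrite HJ, H2_S, S_INR; field; lra.
Qed.

Lemma H2_S_bounds (n : nat) : PI ^ 2 / 6 - 2 / INR (S n) <= H2 (S n) <= PI ^ 2 / 6.
Proof.
  pose proof (Wallis_sq_even (S n)) as HJ.
  pose proof (Wallis_even_pos (S n)) as Hw.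
  replace (2 * S n)%nat with (2 * n + 2)%nat in HJ, Hw by lia.
  pose proof (Wallis_sq_ge0 (2 * n + 2)) as HJ0; pose proof (Wallis_sq_le (2 * n)) as HJ1.
  pose proof (Wallis_rec (2 * n)) as HW; rewrite mult_INR in HW; simpl INR in HW.
  rewrite S_INR; pose proof (pos_INR n).
  set (w := Wallis (2 * n + 2)) in *; set (e := PI ^ 2 / 12 - H2 (S n) / 2) in *.
  assert (He0 : 0 <= e) by (apply (Rmult_le_reg_l w); [lra | rewrite Rmult_0_r; lra]).
  assert (Hdiff : (2 * INR n + 1) * (Wallis (2 * n) - w) = w) by lra.
  assert (He1 : e <= 1 / (INR n + 1)).
  { apply Rle_div_r; [lra | ].
    apply (Rmult_le_reg_l w); [lra | ].
    rewrite <- Hdiff at 2; nra. }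
  unfold e in *; lra.
Qed.

Lemma is_lim_seq_inv_INR_S : is_lim_seq (fun n => / INR (S n)) 0.
Proof.
  apply (is_lim_seq_incr_1 (fun n => / INR n) 0).
  replace (Finite 0) with (Rbar_inv p_infty) by reflexivity.
  apply is_lim_seq_inv; [apply is_lim_seq_INR | discriminate].
Qed.

Lemma zeta2_eq : zeta2 = PI ^ 2 / 6.
Proof.
  unfold zeta2; apply is_series_unique.
  change (is_lim_seq (sum_n (fun n => / INR (S n) ^ 2)) (PI ^ 2 / 6)).
  apply (is_lim_seq_ext (fun n => H2 (S n))).
  { intros n; unfold H2, sum_n; rewrite <- sum_n_m_S; reflexivity. }
  apply (is_lim_seq_le_le (fun n => PI ^ 2 / 6 - 2 * / INR (S n)) _ (fun _ => PI ^ 2 / 6));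
    [apply H2_S_bounds | | apply is_lim_seq_const].
  replace (Finite (PI ^ 2 / 6)) with (Finite (PI ^ 2 / 6 - 2 * 0)) by (f_equal; ring).
  apply is_lim_seq_minus'; [apply is_lim_seq_const | ].
  exact (is_lim_seq_scal_l _ 2 0 is_lim_seq_inv_INR_S).
Qed.

Definition cbinom_ratio (k : nat) : R := 4 ^ k / (INR k * Binomial.C (2 * k) k).

Lemma Binomial_C_pos (n k : nat) : 0 < Binomial.C n k.
Proof.
  unfold Binomial.C; apply Rdiv_lt_0_compat; [ | apply Rmult_lt_0_compat];
    apply INR_fact_lt_0.
Qed.

Lemma Binomial_C_central_S (k : nat) :
  Binomial.C (2 * S k) (S k) = 2 * (2 * INR k + 1) / (INR k + 1) * Binomial.C (2 * k) k.
Proof.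
  unfold Binomial.C.
  replace (2 * S k - S k)%nat with (S k) by lia; replace (2 * k - k)%nat with k by lia.
  replace (2 * S k)%nat with (S (S (2 * k))) by lia.
  rewrite !fact_simpl, !mult_INR, !S_INR, mult_INR; simpl INR.
  pose proof (INR_fact_lt_0 k); pose proof (INR_fact_lt_0 (2 * k)); pose proof (pos_INR k).
  field; lra.
Qed.

Lemma cbinom_ratio_S (k : nat) :
  (0 < k)%nat -> cbinom_ratio (S k) = 2 * INR k / (2 * INR k + 1) * cbinom_ratio k.
Proof.
  intros Hk; unfold cbinom_ratio.
  rewrite Binomial_C_central_S, S_INR; simpl pow.
  pose proof (Binomial_C_pos (2 * k) k); assert (0 < INR k) by (apply lt_0_INR; exact Hk).
  field; lra.
Qed.

Lemma Wallis_odd (k : nat) : Wallis (2 * k + 1) = cbinom_ratio (S k) / 2.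
Proof.
  induction k as [|k IH].
  - simpl; rewrite Wallis_1; unfold cbinom_ratio, Binomial.C; simpl; field.
  - replace (2 * S k + 1)%nat with (2 * k + 1 + 2)%nat by lia.
    pose proof (Wallis_rec (2 * k + 1)) as HW; pose proof (pos_INR k).
    replace (INR (2 * k + 1)) with (2 * INR k + 1) in HW
      by (rewrite plus_INR, mult_INR; simpl; ring).
    rewrite (cbinom_ratio_S (S k)), S_INR by lia.
    apply (Rmult_eq_reg_l (2 * INR k + 1 + 2)); [ | lra].
    rewrite HW, IH; field; lra.
Qed.

Lemma Wallis_sq_odd (k : nat) :
  Wallis_sq (2 * k + 1) = cbinom_ratio (S k) * (H2 (S k) / 4 - H2 (2 * S k) + PI ^ 2 / 8).
Proof.
  induction k as [|k IH].
  - simpl; rewrite Wallis_sq_1, H2_1, H2_2; unfold cbinom_ratio, Binomial.C; simpl; field.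
  - pose proof (Wallis_sq_rec (2 * k + 1)) as HJ; pose proof (pos_INR k).
    replace (INR (2 * k + 1)) with (2 * INR k + 1) in HJ
      by (rewrite plus_INR, mult_INR; simpl; ring).
    replace (2 * k + 1 + 2)%nat with (2 * S k + 1)%nat in HJ by lia.
    rewrite Wallis_odd, IH in HJ.
    assert (HA : H2 (S (S k)) = H2 (S k) + / (INR k + 2) ^ 2)
      by (rewrite H2_S, !S_INR; field; lra).
    assert (HB : H2 (2 * S (S k))
                 = H2 (2 * S k) + / (2 * INR k + 3) ^ 2 + / (2 * INR k + 4) ^ 2).
    { replace (2 * S (S k))%nat with (S (S (2 * S k))) by lia.
      rewrite !H2_S, !S_INR, mult_INR, !S_INR; simpl INR; field; lra. }
    rewrite (cbinom_ratio_S (S k)) in HJ |- * by lia.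
    rewrite HA, HB, !S_INR in *.
    apply (Rmult_eq_reg_l ((2 * INR k + 1 + 2) ^ 2)); [ | apply pow_nonzero; lra].
    rewrite HJ; field; lra.
Qed.

Theorem lemma4 (k : nat) (hk : (1 <= k)%nat) :
  RInt (fun x => x ^ 2 * cos x ^ (2 * k - 1)) 0 (PI / 2) =
    / 4 * (4 ^ k * H2 k / (INR k * Binomial.C (2 * k) k))
    - 4 ^ k * H2 (2 * k) / (INR k * Binomial.C (2 * k) k)
    + 3 / 4 * zeta2 * (4 ^ k / (INR k * Binomial.C (2 * k) k)).
Proof.
  destruct k as [|k]; [lia | ].
  replace (2 * S k - 1)%nat with (2 * k + 1)%nat by lia.
  (* The statement's equality lives in Coquelicot's module carrier, where [field] does not apply. *)
  match goal with |- _ = ?rhs => change (Wallis_sq (2 * k + 1) = rhs) end.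
  rewrite Wallis_sq_odd, zeta2_eq; unfold cbinom_ratio.
  pose proof (Binomial_C_pos (2 * S k) (S k)); pose proof (lt_0_INR (S k) (Nat.lt_0_succ k)).
  field; split; lra.
Qed.
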